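(* Let $A\overset{i}{\to}U\overset{j}{\to}S$ be an extension of a semilattice of groups $A$ by an inverse semigroup $S$, and suppose $S$ is an $F$-inverse monoid. Then there exists an order-preserving transversal $\rho$ of $j$.
   Context: A semilattice of groups is an inverse semigroup whose idempotents are central. An extension of $A$ by $S$ is an inverse semigroup $U$ with a monomorphism $i:A\to U$ and an idempotent-separating epimorphism $j:U\to S$ with $i(A)=j^{-1}(E(S))$. A transversal of $j$ is a map $\rho:S\to U$ with $j\circ\rho=\mathrm{id}_S$ and $\rho(E(S))\subseteq E(U)$; it is order-preserving if $s\le t$ implies $\rho(s)\le\rho(t)$ (natural partial orders). An $F$-inverse monoid is an inverse semigroup in which every class of the minimum group congruence $\sigma$ ($(s,t)\in\sigma$ iff $es=et$ for some idempotent $e$) has a maximum element. *)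

Record InverseSemigroup := {
  carrier :> Type;
  mul : carrier -> carrier -> carrier;
  mul_assoc : forall x y z, mul x (mul y z) = mul (mul x y) z;
  unique_inverse : forall x, exists! y, mul (mul x y) x = x /\ mul (mul y x) y = y
}.

Arguments mul {_} _ _.

Definition idempotent {S : InverseSemigroup} (e : S) : Prop := mul e e = e.

Definition nat_le {S : InverseSemigroup} (s t : S) : Prop :=
  exists e : S, idempotent e /\ s = mul e t.

Definition semilattice_of_groups (S : InverseSemigroup) : Prop :=
  forall e s : S, idempotent e -> mul e s = mul s e.

Definition is_hom {S T : InverseSemigroup} (f : S -> T) : Prop :=
  forall x y : S, f (mul x y) = mul (f x) (f y).

Definition is_mono {S T : InverseSemigroup} (f : S -> T) : Prop :=
  is_hom f /\ forall x y, f x = f y -> x = y.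

Definition is_epi {S T : InverseSemigroup} (f : S -> T) : Prop :=
  is_hom f /\ forall y, exists x, f x = y.

Definition idempotent_separating {S T : InverseSemigroup} (f : S -> T) : Prop :=
  forall e e' : S, idempotent e -> idempotent e' -> f e = f e' -> e = e'.

Definition is_extension (A U S : InverseSemigroup) (i : A -> U) (j : U -> S) : Prop :=
  is_mono i /\ is_epi j /\ idempotent_separating j /\
  (forall u : U, (exists a : A, i a = u) <-> idempotent (j u)).

Definition sigma_rel {S : InverseSemigroup} (s t : S) : Prop :=
  exists e : S, idempotent e /\ mul e s = mul e t.

Definition F_inverse (S : InverseSemigroup) : Prop :=
  forall s : S, exists m : S, sigma_rel m s /\
    forall t : S, sigma_rel t s -> nat_le t m.

Definition is_transversal {U S : InverseSemigroup} (j : U -> S) (rho : S -> U) : Prop :=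
  (forall s, j (rho s) = s) /\ (forall s : S, idempotent s -> idempotent (rho s)).

Definition order_preserving {S U : InverseSemigroup} (rho : S -> U) : Prop :=
  forall s t : S, nat_le s t -> nat_le (rho s) (rho t).

(* In an F-inverse monoid every sigma-class has a maximum M(s), and s <= t forces
   M(s) = M(t). Fix any transversal W of j and put rho(s) := W(s s^-1) W(M(s)).
   Its image is s s^-1 M(s) = s; if s <= t then, j being idempotent-separating,
   W(s s^-1) = W(s s^-1) W(t t^-1), whence rho(s) = W(s s^-1) rho(t) <= rho(t). *)

From Stdlib Require Import ClassicalEpsilon.

Local Notation "x ⋅ y" := (mul x y) (at level 40, left associativity).

Ltac assoc := rewrite ?mul_assoc; reflexivity.

Section InverseSemigroupTheory.
Variable S : InverseSemigroup.

Definition inv (x : S) : S :=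
  proj1_sig (constructive_indefinite_description _ (unique_inverse S x)).

Lemma inv_spec (x : S) : x ⋅ inv x ⋅ x = x /\ inv x ⋅ x ⋅ inv x = inv x.
Proof.
  exact (proj1 (proj2_sig (constructive_indefinite_description _ (unique_inverse S x)))).
Qed.

Lemma inv_unique (x y : S) : x ⋅ y ⋅ x = x -> y ⋅ x ⋅ y = y -> y = inv x.
Proof.
  intros H1 H2; unfold inv; symmetry.
  now apply (proj2_sig (constructive_indefinite_description _ (unique_inverse S x))).
Qed.

Lemma mulVK (x : S) : x ⋅ inv x ⋅ x = x.
Proof. apply inv_spec. Qed.

Lemma mulKV (x : S) : inv x ⋅ x ⋅ inv x = inv x.
Proof. apply inv_spec. Qed.

Lemma invK (x : S) : inv (inv x) = x.
Proof. symmetry; apply inv_unique; [apply mulKV | apply mulVK]. Qed.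

Lemma inv_idem (e : S) : idempotent e -> inv e = e.
Proof. intros He; symmetry; apply inv_unique; unfold idempotent in He; now rewrite !He. Qed.

Lemma idem_mulV (x : S) : idempotent (x ⋅ inv x).
Proof. unfold idempotent. transitivity (x ⋅ inv x ⋅ x ⋅ inv x); [assoc|]. now rewrite mulVK. Qed.

Lemma idem_Vmul (x : S) : idempotent (inv x ⋅ x).
Proof. unfold idempotent. transitivity (inv x ⋅ x ⋅ inv x ⋅ x); [assoc|]. now rewrite mulKV. Qed.

Lemma idem_mul (e f : S) : idempotent e -> idempotent f -> idempotent (e ⋅ f).
Proof.
  intros He Hf; unfold idempotent in *.
  set (x := inv (e ⋅ f)).
  assert (Hx1 : e ⋅ f ⋅ x ⋅ (e ⋅ f) = e ⋅ f) by apply mulVK.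
  assert (Hx2 : x ⋅ (e ⋅ f) ⋅ x = x) by apply mulKV.
  (* f x e is also an inverse of e f, hence equals x *)
  assert (Hfxe : f ⋅ x ⋅ e = x).
  { apply inv_unique.
    - transitivity (e ⋅ (f ⋅ f) ⋅ x ⋅ (e ⋅ e) ⋅ f); [assoc|]. rewrite He, Hf.
      transitivity (e ⋅ f ⋅ x ⋅ (e ⋅ f)); [assoc|]. exact Hx1.
    - transitivity (f ⋅ (x ⋅ (e ⋅ e) ⋅ (f ⋅ f) ⋅ x) ⋅ e); [assoc|]. rewrite He, Hf.
      transitivity (f ⋅ (x ⋅ (e ⋅ f) ⋅ x) ⋅ e); [assoc|]. now rewrite Hx2. }
  assert (Hxx : x ⋅ x = x).
  { rewrite <- Hfxe at 1 2.
    transitivity (f ⋅ (x ⋅ (e ⋅ f) ⋅ x) ⋅ e); [assoc|]. now rewrite Hx2. }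
  assert (Hef : e ⋅ f = x).
  { rewrite <- (inv_idem x Hxx). unfold x. symmetry. apply invK. }
  now rewrite Hef.
Qed.

Lemma idem_commute (e f : S) : idempotent e -> idempotent f -> e ⋅ f = f ⋅ e.
Proof.
  intros He Hf.
  pose proof (idem_mul e f He Hf) as Hef; pose proof (idem_mul f e Hf He) as Hfe.
  rewrite <- (inv_idem _ Hef). symmetry; apply inv_unique; unfold idempotent in *.
  - transitivity (e ⋅ (f ⋅ f) ⋅ (e ⋅ e) ⋅ f); [assoc|]. rewrite He, Hf.
    transitivity (e ⋅ f ⋅ (e ⋅ f)); [assoc|]. exact Hef.
  - transitivity (f ⋅ (e ⋅ e) ⋅ (f ⋅ f) ⋅ e); [assoc|]. rewrite He, Hf.
    transitivity (f ⋅ e ⋅ (f ⋅ e)); [assoc|]. exact Hfe.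
Qed.

Lemma invM (x y : S) : inv (x ⋅ y) = inv y ⋅ inv x.
Proof.
  symmetry; apply inv_unique.
  - transitivity (x ⋅ ((y ⋅ inv y) ⋅ (inv x ⋅ x)) ⋅ y); [assoc|].
    rewrite (idem_commute _ _ (idem_mulV y) (idem_Vmul x)).
    transitivity (x ⋅ inv x ⋅ x ⋅ (y ⋅ inv y ⋅ y)); [assoc|]. now rewrite !mulVK.
  - transitivity (inv y ⋅ ((inv x ⋅ x) ⋅ (y ⋅ inv y)) ⋅ inv x); [assoc|].
    rewrite (idem_commute _ _ (idem_Vmul x) (idem_mulV y)).
    transitivity (inv y ⋅ y ⋅ inv y ⋅ (inv x ⋅ x ⋅ inv x)); [assoc|]. now rewrite !mulKV.
Qed.

Lemma mulV_idem_mul (e t : S) :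
  idempotent e -> e ⋅ t ⋅ inv (e ⋅ t) = e ⋅ (t ⋅ inv t).
Proof.
  intros He. rewrite invM, (inv_idem e He).
  transitivity (e ⋅ ((t ⋅ inv t) ⋅ e)); [assoc|].
  rewrite (idem_commute _ _ (idem_mulV t) He).
  transitivity (e ⋅ e ⋅ (t ⋅ inv t)); [assoc|]. now rewrite He.
Qed.

Lemma nat_le_mulV_l (s t : S) : nat_le s t -> s ⋅ inv s ⋅ t = s.
Proof.
  intros [e [He ->]]. rewrite (mulV_idem_mul e t He).
  transitivity (e ⋅ (t ⋅ inv t ⋅ t)); [assoc|]. now rewrite mulVK.
Qed.

Lemma nat_le_mulV (s t : S) : nat_le s t -> s ⋅ inv s ⋅ (t ⋅ inv t) = s ⋅ inv s.
Proof.
  intros [e [He ->]]. rewrite (mulV_idem_mul e t He).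
  transitivity (e ⋅ ((t ⋅ inv t) ⋅ (t ⋅ inv t))); [assoc|]. now rewrite (idem_mulV t).
Qed.

Lemma nat_le_antisym (s t : S) : nat_le s t -> nat_le t s -> s = t.
Proof.
  intros Hst Hts.
  rewrite <- (nat_le_mulV_l s t Hst), <- (nat_le_mulV_l t s Hts) at 1.
  transitivity ((s ⋅ inv s ⋅ (t ⋅ inv t)) ⋅ s); [assoc|].
  rewrite (idem_commute _ _ (idem_mulV s) (idem_mulV t)).
  transitivity (t ⋅ inv t ⋅ (s ⋅ inv s ⋅ s)); [assoc|].
  now rewrite mulVK, (nat_le_mulV_l t s Hts).
Qed.

Lemma sigma_refl (s : S) : sigma_rel s s.
Proof. exists (s ⋅ inv s). split; [apply idem_mulV | reflexivity]. Qed.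

Lemma sigma_sym (s t : S) : sigma_rel s t -> sigma_rel t s.
Proof. intros [e [He H]]. now exists e. Qed.

Lemma sigma_trans (s t u : S) : sigma_rel s t -> sigma_rel t u -> sigma_rel s u.
Proof.
  intros [e [He Hst]] [f [Hf Htu]]. exists (e ⋅ f). split; [now apply idem_mul|].
  rewrite (idem_commute e f He Hf) at 1.
  transitivity (f ⋅ (e ⋅ s)); [assoc|]. rewrite Hst.
  transitivity (e ⋅ (f ⋅ t)); [rewrite !mul_assoc, (idem_commute e f He Hf); reflexivity|].
  rewrite Htu. assoc.
Qed.

Lemma nat_le_sigma (s t : S) : nat_le s t -> sigma_rel s t.
Proof.
  intros [e [He ->]]. exists e. split; [exact He|].
  transitivity (e ⋅ e ⋅ t); [assoc|]. now rewrite He.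
Qed.

Definition is_sigma_max (s m : S) : Prop :=
  sigma_rel m s /\ forall t, sigma_rel t s -> nat_le t m.

Lemma sigma_max_ge (s m : S) : is_sigma_max s m -> nat_le s m.
Proof. intros [_ Hmax]. apply Hmax, sigma_refl. Qed.

Lemma sigma_max_nat_le (s t m m' : S) :
  nat_le s t -> is_sigma_max s m -> is_sigma_max t m' -> m = m'.
Proof.
  intros Hst [Hms Hmax] [Hmt Hmax']. apply nat_le_antisym.
  - apply Hmax'. apply sigma_trans with s; [exact Hms | now apply nat_le_sigma].
  - apply Hmax. apply sigma_trans with t; [exact Hmt | now apply sigma_sym, nat_le_sigma].
Qed.

(* m m^-1 lies in the sigma-class of e, so m m^-1 <= m, i.e. m m^-1 = m *)
Lemma sigma_max_idem (e m : S) : idempotent e -> is_sigma_max e m -> idempotent m.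
Proof.
  intros He [[g [Hg Hgm]] Hmax].
  assert (Hgm_idem : idempotent (g ⋅ m)) by (rewrite Hgm; now apply idem_mul).
  assert (HVg : inv m ⋅ g = g ⋅ m).
  { rewrite <- (inv_idem g Hg) at 1. rewrite <- invM. now apply inv_idem. }
  assert (Hsig : sigma_rel (m ⋅ inv m) e).
  { exists g. split; [exact Hg|].
    transitivity (g ⋅ g ⋅ (m ⋅ inv m)); [now rewrite Hg|].
    transitivity (g ⋅ ((m ⋅ inv m) ⋅ g)); [rewrite (idem_commute _ _ (idem_mulV m) Hg); assoc|].
    transitivity ((g ⋅ m) ⋅ (inv m ⋅ g)); [assoc|].
    now rewrite HVg, Hgm_idem. }
  pose proof (nat_le_mulV_l _ _ (Hmax _ Hsig)) as Hm.
  rewrite (inv_idem _ (idem_mulV m)), (idem_mulV m), mulVK in Hm.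
  pose proof (idem_mulV m) as Hidem. now rewrite <- Hm in Hidem.
Qed.

End InverseSemigroupTheory.

Arguments inv {S} x.

Lemma hom_inv {U S : InverseSemigroup} (j : U -> S) :
  is_hom j -> forall u, j (inv u) = inv (j u).
Proof.
  intros Hj u. apply inv_unique; rewrite <- !Hj; [now rewrite mulVK | now rewrite mulKV].
Qed.

Lemma epi_lift_idem {U S : InverseSemigroup} (j : U -> S) (e : S) :
  is_epi j -> idempotent e -> exists f : U, idempotent f /\ j f = e.
Proof.
  intros [Hj Hjs] He. destruct (Hjs e) as [u Hu]. exists (u ⋅ inv u). split.
  - apply idem_mulV.
  - now rewrite Hj, (hom_inv j Hj), Hu, (inv_idem _ e He).
Qed.

Lemma epi_transversal {U S : InverseSemigroup} (j : U -> S) :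
  is_epi j -> exists W : S -> U, is_transversal j W.
Proof.
  intros Hepi.
  destruct (choice (fun (s : S) (u : U) => j u = s /\ (idempotent s -> idempotent u)))
    as [W HW].
  - intro s. destruct (excluded_middle_informative (idempotent s)) as [Hs|Hs].
    + destruct (epi_lift_idem j s Hepi Hs) as [f [Hf Hjf]]. now exists f.
    + destruct (proj2 Hepi s) as [u Hu]. now exists u.
  - exists W. split; intro s; apply HW.
Qed.

Lemma idem_sep_mul {U S : InverseSemigroup} (j : U -> S) (e f : U) :
  is_hom j -> idempotent_separating j -> idempotent e -> idempotent f ->
  j e ⋅ j f = j e -> e ⋅ f = e.
Proof. intros Hj Hsep He Hf Hjef. apply Hsep; [now apply idem_mul | exact He | now rewrite Hj]. Qed.

Theorem proposition3p26 (A U S : InverseSemigroup) (i : A -> U) (j : U -> S) :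
  is_extension A U S i j ->
  semilattice_of_groups A ->
  F_inverse S ->
  exists rho : S -> U, is_transversal j rho /\ order_preserving rho.
Proof.
  intros [_ [Hepi [Hsep _]]] _ HF.
  destruct (epi_transversal j Hepi) as [W [HjW HWidem]].
  destruct (choice (is_sigma_max S) HF) as [M HM].
  pose (F s := W (s ⋅ inv s)).
  assert (HF_idem : forall s, idempotent (F s)) by (intro s; apply HWidem, idem_mulV).
  exists (fun s => F s ⋅ W (M s)). split; [split|].
  - intro s. unfold F. rewrite (proj1 Hepi), !HjW.
    apply nat_le_mulV_l, sigma_max_ge, HM.
  - intros s Hs. apply idem_mul; [apply HF_idem|].
    apply HWidem, (sigma_max_idem S s); [exact Hs | apply HM].
  - intros s t Hst. exists (F s). split; [apply HF_idem|].
    rewrite (sigma_max_nat_le S s t (M s) (M t) Hst (HM s) (HM t)).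
    assert (HFst : F s ⋅ F t = F s).
    { apply (idem_sep_mul j); try apply HF_idem; [exact (proj1 Hepi) | exact Hsep |].
      unfold F. rewrite !HjW. now apply nat_le_mulV. }
    now rewrite mul_assoc, HFst.
Qed.
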